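(* Let $B$ and $B'$ be distinct bases of a sparse paving matroid $M$. For any $a\in B-B'$ and any $X\subseteq B'-B$, there are at least $|X|-2$ elements $x\in X$ for which both $(B-a)\cup \{x\}$ and $(B'-x)\cup \{a\}$ are bases of $M$.
   Context: A matroid $M$ of rank $r$ is sparse paving if every nonspanning circuit of $M$ is a hyperplane; equivalently, every $r$-element subset of $E(M)$ is either a basis or a circuit-hyperplane (a set that is both a circuit and a hyperplane). *)

From mathcomp Require Import all_boot.
Set Implicit Arguments. Unset Strict Implicit. Unset Printing Implicit Defensive.

Record matroid (T : finType) := Matroid {
  mbases : {set {set T}};
  mbases_nonempty : mbases != set0;
  mbases_exchange : forall B1 B2, B1 \in mbases -> B2 \in mbases ->
    forall x, x \in B1 :\: B2 ->
    exists2 y, y \in B2 :\: B1 & (B1 :\ x) :|: [set y] \in mbases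
}.

Section MatroidDefs.
Variables (T : finType) (M : matroid T).

Definition is_basis (B : {set T}) : bool := B \in mbases M.

Definition indep (A : {set T}) : bool := [exists B in mbases M, A \subset B].

Definition rank (A : {set T}) : nat :=
  \max_(I : {set T} | (I \subset A) && indep I) #|I|.

Definition mrank : nat := rank [set: T].

Definition circuit (C : {set T}) : bool :=
  ~~ indep C && [forall x in C, indep (C :\ x)].

Definition flat (F : {set T}) : bool :=
  [forall x in ~: F, rank F < rank (x |: F)].

Definition hyperplane (H : {set T}) : bool :=
  flat H && ((rank H).+1 == mrank).

Definition sparse_paving : Prop :=
  forall C : {set T}, circuit C -> rank C < mrank -> hyperplane C.

End MatroidDefs.

From mathcomp Require Import all_boot.
From mathcomp Require Import zify.

(* In a sparse paving matroid of rank r, every set of fewer than r elements is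
   independent, and every r-set that is not a basis is a circuit-hyperplane.
   Let B be a basis.
   - For a in B, at most one x outside B makes B - a + x a non-basis: if
     S = B - a + x is a hyperplane and y is outside S, then y + S spans, and
     augmenting B - a from a basis inside y + S can only add x or y.
   - For a outside B, at most one x in B makes B - x + a a non-basis: for x != y
     in B, the (r-1)-set B - x - y + a is independent, and augmenting it from B
     can only add x or y.
   So each of the two exchange conditions fails for at most one x in X. *)

Set Implicit Arguments. Unset Strict Implicit. Unset Printing Implicit Defensive.

Lemma cardsD1U1 (T : finType) (A : {set T}) x y :
  x \in A -> y \notin A -> #|A :\ x :|: [set y]| = #|A|.
Proof.
move=> xA yA; rewrite setUC cardsU1 (cardsD1 x A) xA !inE negb_and yA orbT.
by rewrite addnC.
Qed.

Lemma leq_card_sep_andb (T : finType) (A : {set T}) (p q : pred T) :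
  #|A| <= #|[set x in A | p x && q x]| + #|[set x in A | ~~ p x]|
          + #|[set x in A | ~~ q x]|.
Proof.
set G := [set x in A | _]; set Np := [set x in A | _]; set Nq := [set x in A | _].
have sA : A \subset G :|: Np :|: Nq.
  by apply/subsetP => z zA; rewrite !inE zA; case: (p z); case: (q z).
apply: leq_trans (subset_leq_card sA) _.
apply: leq_trans (leq_card_setU _ _).1 _.
by rewrite leq_add2r (leq_card_setU _ _).1.
Qed.

Section MatroidTheory.
Variables (T : finType) (M : matroid T).

Lemma card_bases (B1 B2 : {set T}) :
  is_basis M B1 -> is_basis M B2 -> #|B1| = #|B2|.
Proof.
move: {2}#|B1 :\: B2| (erefl #|B1 :\: B2|) => n.
elim: n B1 => [|n IH] B1 hn h1 h2.
  have s12 : B1 \subset B2 by rewrite -setD_eq0 -cards_eq0 hn.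
  suff -> : B1 = B2 by [].
  apply/eqP; rewrite eqEsubset s12 /=; apply/subsetP => z zB2.
  apply/negPn/negP => zB1.
  have zD : z \in B2 :\: B1 by rewrite !inE zB2 zB1.
  have [y] := mbases_exchange h2 h1 zD.
  by rewrite !inE => /andP[/negP yB2 /(subsetP s12)].
have [x xD] : exists x, x \in B1 :\: B2 by apply/set0Pn; rewrite -card_gt0 hn.
have [y yD h3] := mbases_exchange h1 h2 xD.
move: (xD) (yD); rewrite !inE => /andP[xB2 xB1] /andP[yB1 yB2].
rewrite -(cardsD1U1 xB1 yB1); apply: IH => //.
rewrite setDUl; have -> : [set y] :\: B2 = set0 by apply/eqP; rewrite setD_eq0 sub1set.
by move: hn; rewrite setU0 setDDl setUC -setDDl (cardsD1 x (B1 :\: B2)) xD => -[].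
Qed.

Lemma indepP (A : {set T}) :
  reflect (exists2 B, is_basis M B & A \subset B) (indep M A).
Proof. exact: exists_inP. Qed.

Lemma basis_indep (B : {set T}) : is_basis M B -> indep M B.
Proof. by move=> hB; apply/indepP; exists B. Qed.

Lemma indepS (A A' : {set T}) : A \subset A' -> indep M A' -> indep M A.
Proof.
by move=> sAA' /indepP[B hB sA'B]; apply/indepP; exists B; rewrite ?(subset_trans sAA').
Qed.

Lemma indep0 : indep M set0.
Proof.
have [B hB] := set0Pn _ (mbases_nonempty M).
exact: indepS (sub0set B) (basis_indep hB).
Qed.

Lemma indep_le_rank (A I : {set T}) : I \subset A -> indep M I -> #|I| <= rank M A.
Proof.
move=> sIA iI; rewrite /rank.
apply: (@leq_bigmax_cond _ (fun I : {set T} => (I \subset A) && indep M I)).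
by rewrite sIA iI.
Qed.

Lemma rank_witness (A : {set T}) :
  exists2 I : {set T}, (I \subset A) && indep M I & rank M A = #|I|.
Proof.
have : 0 < #|[pred I : {set T} | (I \subset A) && indep M I]|.
  by apply/card_gt0P; exists set0; rewrite inE sub0set indep0.
move=> /(eq_bigmax_cond (fun I : {set T} => #|I|))[I] hI e.
by exists I; [move: hI; rewrite inE | rewrite /rank -e].
Qed.

Lemma card_basis (B : {set T}) : is_basis M B -> #|B| = mrank M.
Proof.
move=> hB; apply/eqP; rewrite eqn_leq indep_le_rank ?subsetT ?basis_indep //=.
rewrite /mrank; have [I /andP[_ /indepP[B1 hB1 sIB1]] ->] := rank_witness [set: T].
by rewrite (card_bases hB hB1) subset_leq_card.
Qed.

Lemma indep_card_basis (A : {set T}) : indep M A -> mrank M <= #|A| -> is_basis M A.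
Proof.
case/indepP=> B hB sAB; rewrite -(card_basis hB) => cBA.
suff /eqP -> : A == B by [].
by rewrite eqEcard sAB.
Qed.

Lemma full_rank_basis (A : {set T}) :
  mrank M <= rank M A -> exists2 B, is_basis M B & B \subset A.
Proof.
have [I /andP[sIA iI] ->] := rank_witness A => cI.
by exists I; rewrite ?indep_card_basis.
Qed.

Lemma dep_rank_lt_card (C : {set T}) : ~~ indep M C -> rank M C < #|C|.
Proof.
move=> dC; have [I /andP[sIC iI] ->] := rank_witness C.
by rewrite proper_card // properEneq sIC andbT; apply: contraNneq dC => <-.
Qed.

Lemma dep_sub_circuit (A : {set T}) :
  ~~ indep M A -> exists2 C, circuit M C & C \subset A.
Proof.
move=> dA; have exP : exists C : {set T}, (C \subset A) && ~~ indep M C.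
  by exists A; rewrite subxx.
have [C /minsetP[/andP[sCA dC] minC]] := ex_minset exP.
exists C => //; rewrite /circuit dC; apply/forall_inP => x xC; apply: contraT => dCx.
have sCxC := subD1set C x.
have /setP/(_ x) := minC _ (introT andP (conj (subset_trans sCxC sCA) dCx)) sCxC.
by rewrite !inE eqxx xC.
Qed.

Lemma indep_augment (W B : {set T}) :
  indep M W -> is_basis M B -> #|W| < #|B| ->
  exists2 w, w \in B :\: W & indep M (w |: W).
Proof.
case/indepP=> B1 hB1 sWB1 hB cWB.
have [u] : exists u, u \in B1 :\: W.
  apply/set0Pn; rewrite -card_gt0 cardsD (setIidPr sWB1) (card_bases hB1 hB); lia.
rewrite inE => /andP[uW uB1].
case: (boolP (u \in B)) => uB.
  exists u; first by rewrite inE uW.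
  by apply: indepS (basis_indep hB1); rewrite subUset sub1set uB1.
have uD : u \in B1 :\: B by rewrite inE uB uB1.
have [w] := mbases_exchange hB1 hB uD.
rewrite inE => /andP[wB1 wB] hB2; exists w.
  by rewrite inE wB andbT; apply: contra wB1 => /(subsetP sWB1).
apply: indepS (basis_indep hB2).
by rewrite [_ :|: [set w]]setUC setUS // subsetD1 sWB1.
Qed.

End MatroidTheory.

Section SparsePaving.
Variables (T : finType) (M : matroid T).
Hypothesis spM : sparse_paving M.

Lemma sparse_paving_circuit_card (C : {set T}) : circuit M C -> mrank M <= #|C|.
Proof.
move=> cC; rewrite leqNgt; apply/negP => small.
have rC := dep_rank_lt_card (proj1 (andP cC)).
have /andP[_ /eqP] := spM cC (ltn_trans rC small).
lia.
Qed.

Lemma sparse_paving_small_indep (A : {set T}) : #|A| < mrank M -> indep M A.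
Proof.
move=> small; apply: contraT => /dep_sub_circuit[C /sparse_paving_circuit_card cC sCA].
by move: small; rewrite ltnNge (leq_trans cC (subset_leq_card sCA)).
Qed.

Lemma sparse_paving_nonbasis_hyperplane (S : {set T}) :
  ~~ is_basis M S -> #|S| = mrank M -> hyperplane M S.
Proof.
move=> nbS cS.
have dS : ~~ indep M S by apply: contra nbS => iS; rewrite indep_card_basis ?cS.
apply: spM; last by rewrite -cS dep_rank_lt_card.
rewrite /circuit dS; apply/forall_inP => z zS; apply: sparse_paving_small_indep.
by rewrite -cS (cardsD1 z S) zS.
Qed.

Lemma card_nonbasis_swap_in (B : {set T}) a : is_basis M B -> a \in B ->
  #|[set x in ~: B | ~~ is_basis M (B :\ a :|: [set x])]| <= 1.
Proof.
move=> hB aB; apply/card_le1_eqP => x y; rewrite !inE => /andP[xB nx] /andP[yB ny].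
apply: contraTeq isT => xy.
have cBa : #|B :\ a|.+1 = mrank M by rewrite -(card_basis hB) (cardsD1 a B) aB.
have cS : #|B :\ a :|: [set x]| = mrank M by rewrite cardsD1U1 // (card_basis hB).
have /andP[/forall_inP flatS /eqP rS] := sparse_paving_nonbasis_hyperplane nx cS.
have yS : y \in ~: (B :\ a :|: [set x]) by rewrite !inE negb_or negb_and yB orbT xy.
have /full_rank_basis[I hI sIS] : mrank M <= rank M (y |: (B :\ a :|: [set x])).
  by rewrite -rS flatS.
have cI : #|B :\ a| < #|I| by rewrite (card_basis hI) -cBa.
have [w] := indep_augment (indepS (subD1set B a) (basis_indep hB)) hI cI.
rewrite inE => /andP[wBa /(subsetP sIS)] wS iw.
have hw : is_basis M (B :\ a :|: [set w]).
  by rewrite setUC indep_card_basis // cardsU1 wBa -cBa.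
move: wS hw; rewrite in_setU1 in_setU (negbTE wBa) in_set1.
by case/orP=> /eqP->; [rewrite (negbTE ny) | rewrite (negbTE nx)].
Qed.

Lemma card_nonbasis_swap_out (B : {set T}) a : is_basis M B -> a \notin B ->
  #|[set x in B | ~~ is_basis M (B :\ x :|: [set a])]| <= 1.
Proof.
move=> hB aB; apply/card_le1_eqP => x y; rewrite !inE => /andP[xB nx] /andP[yB ny].
apply: contraTeq isT => xy.
have swapE u v : u \in B -> u != v ->
    u |: (a |: (B :\: [set u; v])) = B :\ v :|: [set a].
  move=> uB uv; apply/setP => z; rewrite !inE.
  have [->|zu] := eqVneq z u; first by rewrite uv uB.
  have [->|zv] := eqVneq z v; first by rewrite /= orbF.
  by rewrite /= orbC.
have sxyB : [set x; y] \subset B by rewrite subUset !sub1set xB yB.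
have cW : #|a |: (B :\: [set x; y])|.+1 = #|B|.
  have := subset_leq_card sxyB.
  rewrite cards2 (cardsU1 a) in_setD (negbTE aB) andbF cardsD (setIidPr sxyB).
  rewrite cards2 eq_sym xy.
  lia.
have iW : indep M (a |: (B :\: [set x; y])).
  by apply: sparse_paving_small_indep; rewrite -(card_basis hB) -cW.
have [w] := indep_augment iW hB (eq_leq cW).
rewrite in_setD => /andP[wW wB] iw.
have hw : is_basis M (w |: (a |: (B :\: [set x; y]))).
  by rewrite indep_card_basis // cardsU1 wW add1n cW (card_basis hB).
have : w \in [set x; y].
  by apply: contraR wW => wxy; rewrite in_setU1 in_setD wxy wB orbT.
rewrite !inE => /orP[]/eqP ew; move: hw; rewrite ew.
  by rewrite swapE 1?eq_sym // => /(negP ny).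
by rewrite [[set x; y]]setUC swapE // => /(negP nx).
Qed.

End SparsePaving.

Theorem lemma2p2 (T : finType) (M : matroid T) (B B' : {set T}) (a : T)
    (X : {set T}) :
  sparse_paving M ->
  is_basis M B -> is_basis M B' -> B != B' ->
  a \in B :\: B' -> X \subset B' :\: B ->
  #|X| - 2 <=
    #|[set x in X | is_basis M ((B :\ a) :|: [set x])
                    && is_basis M ((B' :\ x) :|: [set a])]|.
Proof.
move=> spM hB hB' _ /setDP[aB aB'] sX.
have bad_in : #|[set x in X | ~~ is_basis M (B :\ a :|: [set x])]| <= 1.
  apply: leq_trans (card_nonbasis_swap_in spM hB aB).
  apply/subset_leq_card/subsetP => x; rewrite !inE => /andP[/(subsetP sX)].
  by rewrite inE => /andP[-> _].
have bad_out : #|[set x in X | ~~ is_basis M (B' :\ x :|: [set a])]| <= 1.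
  apply: leq_trans (card_nonbasis_swap_out spM hB' aB').
  apply/subset_leq_card/subsetP => x; rewrite !inE => /andP[/(subsetP sX)].
  by rewrite inE => /andP[_ ->].
have := leq_card_sep_andb X (fun x => is_basis M (B :\ a :|: [set x]))
  (fun x => is_basis M (B' :\ x :|: [set a])).
lia.
Qed.
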